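(* Let $(\mathcal{N}, +, <)$ be a set $\mathcal{N} \supseteq \mathbb{N}$ with a binary operation $+$ extending addition on $\mathbb{N}$ and a strict total order $<$ extending the usual order on $\mathbb{N}$ (write $x \leq y$ for $x<y$ or $x=y$). Let $\mathrm{num}: \mathcal{P}(\mathbb{N}) \to \mathcal{N}$ satisfy: (Unit) $\mathrm{num}(\{n\}) = 1$ for all $n \in \mathbb{N}$; (Additivity) if $S \cap T = \emptyset$ then $\mathrm{num}(S \cup T) = \mathrm{num}(S) + \mathrm{num}(T)$; (Finite approximation) if $f_n(S) \leq f_n(T)$ for all $n \in \mathbb{N}$ then $\mathrm{num}(S) \leq \mathrm{num}(T)$; (Euclidean principle) if $S \subsetneq T$ then $\mathrm{num}(S) < \mathrm{num}(T)$. Then: (a) $\mathrm{num}(F) = |F|$ for every finite nonempty $F \subseteq \mathbb{N}$; (b) for nonempty $S \subseteq \mathbb{N}$, $\mathrm{num}(S) \in \mathbb{N}$ if and only if $S$ is finite; (c) $\mathrm{num}(\mathbb{N}) \notin \mathbb{N}$ and $\mathrm{num}(S) < \mathrm{num}(\mathbb{N})$ for every $S \subsetneq \mathbb{N}$; (d) for all $S, T \subseteq \mathbb{N}$, if $\mathrm{num}(S) = \mathrm{num}(T)$ then $|S| = |T|$; (e) there exist $S, T \subseteq \mathbb{N}$ with $|S| = |T|$ but $\mathrm{num}(S) \neq \mathrm{num}(T)$.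
   Context: $\mathbb{N} = \{1,2,3,\ldots\}$, $\mathcal{P}(\mathbb{N})$ is its power set, and for $S \subseteq \mathbb{N}$, $f_n(S) = |S \cap \{1,\ldots,n\}|$. $|S|$ denotes cardinality. *)

From mathcomp Require Import all_boot.
From mathcomp Require Import boolp classical_sets functions cardinality.
Set Implicit Arguments. Unset Strict Implicit. Unset Printing Implicit Defensive.
Local Open Scope classical_set_scope.

(* The paper's N = {1,2,3,...} is modelled as the positive elements of nat;
   subsets of N are sets S : set nat with S `<=` posN. *)
Definition posN : set nat := [set n | (0 < n)%N].

Definition fcount (S : set nat) (n : nat) : nat :=
  (\sum_(1 <= i < n.+1) `[< S i >])%N.

(* (𝒩,+,<) with an embedding of N (emb, only its values on positive
   naturals matter): strict total order, emb injective, and + and <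
   extend addition and order of N. *)
Record ext_structure (T : Type) (emb : nat -> T) (add : T -> T -> T)
    (lt : T -> T -> Prop) : Prop := {
  es_irrefl : forall x, ~ lt x x;
  es_trans : forall x y z, lt x y -> lt y z -> lt x z;
  es_total : forall x y, lt x y \/ x = y \/ lt y x;
  es_inj : forall m n, (0 < m)%N -> (0 < n)%N -> emb m = emb n -> m = n;
  es_add : forall m n, (0 < m)%N -> (0 < n)%N -> add (emb m) (emb n) = emb (m + n);
  es_lt : forall m n, (0 < m)%N -> (0 < n)%N -> (lt (emb m) (emb n) <-> (m < n)%N)
}.

Definition ext_le (T : Type) (lt : T -> T -> Prop) (x y : T) : Prop := lt x y \/ x = y.

Definition in_N (T : Type) (emb : nat -> T) (x : T) : Prop :=
  exists n, (0 < n)%N /\ x = emb n.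

From mathcomp Require Import all_boot.
From mathcomp Require Import finmap boolp classical_sets functions cardinality.
Set Implicit Arguments. Unset Strict Implicit. Unset Printing Implicit Defensive.
Local Open Scope classical_set_scope.

(* Unit and additivity give num F = |F| for finite F, by induction on |F|.
   An infinite S properly contains finite subsets of every size, so by the
   Euclidean principle num S lies above every natural number.  Thus num S
   determines whether S is finite and, if so, its size; as all infinite subsets
   of N are equinumerous, equal numerosities force equal cardinalities.  On the
   other hand N \ {1} and N are equinumerous, yet the Euclidean principle
   separates their numerosities. *)

Lemma posN_infinite : infinite_set posN.
Proof.
apply: contra_not (infinite_setD infinite_nat (finite_set1 0%N)).
by apply: sub_finite_set => -[|n] [] //= _ /(_ erefl).
Qed.

Lemma infinite_nat_card_eq (S U : set nat) :
  infinite_set S -> infinite_set U -> (S #= U)%card.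
Proof.
move=> Sinf Uinf; apply: card_eq_trans (eq_card_nat (card_leT S) Sinf) _.
by rewrite card_eq_sym; apply: eq_card_nat.
Qed.

Lemma card_eqI0 T (A : set T) : (A #= `I_0)%card -> A = set0.
Proof. by rewrite II0 card_eq0 => /eqP. Qed.

Lemma card_eqI_gt0 T (A : set T) n : A != set0 -> (A #= `I_n)%card -> (0 < n)%N.
Proof. by case: n => // A0 /card_eqI0 A0'; rewrite A0' eqxx in A0. Qed.

Section Numerosity.

Variables (T : Type) (emb : nat -> T) (add : T -> T -> T) (lt : T -> T -> Prop).
Variable num : set nat -> T.
Hypothesis str : ext_structure emb add lt.
Hypothesis num1 : forall n, (0 < n)%N -> num [set n] = emb 1%N.
Hypothesis numU : forall S U, S `<=` posN -> U `<=` posN -> S `&` U = set0 ->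
  num (S `|` U) = add (num S) (num U).
Hypothesis num_proper : forall S U, S `<=` posN -> U `<=` posN -> S `<` U ->
  lt (num S) (num U).

Lemma num_card_succ n F :
  F `<=` posN -> (F #= `I_n.+1)%card -> num F = emb n.+1.
Proof.
elim: n F => [|n IH] F FP /eq_cardSP [x Fx Fx'].
  by rewrite -(setD1K Fx) (card_eqI0 Fx') setU0 num1 //; apply: FP.
have FxP : F `\ x `<=` posN by move=> y [/FP].
rewrite -(setD1K Fx) numU //; last first.
- by apply/seteqP; split=> y //= [-> []].
- by move=> y ->; apply: FP.
by rewrite num1 ?IH // ?(es_add str) //; apply: FP.
Qed.

Lemma num_finite F n :
  F `<=` posN -> F != set0 -> (F #= `I_n)%card -> num F = emb n.
Proof.
move=> FP F0 Fn; have n0 := card_eqI_gt0 F0 Fn.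
by rewrite -(prednK n0) in Fn *; apply: num_card_succ.
Qed.

Lemma num_infinite_notin_N S :
  S `<=` posN -> infinite_set S -> ~ in_N emb (num S).
Proof.
move=> SP Sinf [n [n0 Sn]].
have [B BS Bn] := infinite_set_fset n.+1 Sinf.
have BP : [set` B] `<=` posN := subset_trans BS SP.
have B0 : (0 < #|` B|)%N := leq_trans n0 (ltnW Bn).
have BS_proper : [set` B] `<` S.
  by split=> // SB; apply/Sinf/(sub_finite_set SB)/finite_fset.
have := num_proper BP SP BS_proper.
rewrite Sn (num_card_succ (n := #|` B|.-1) BP) ?prednK //; last exact/card_eq_fsetP.
by rewrite (es_lt str) // => /(ltn_trans Bn); rewrite ltnn.
Qed.

Lemma in_N_num S :
  S `<=` posN -> S != set0 -> in_N emb (num S) <-> finite_set S.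
Proof.
move=> SP S0; split=> [SN|/finite_setP [n Sn]].
  by apply: contrapT => Sinf; apply: num_infinite_notin_N Sinf SN.
by exists n; split; [apply: card_eqI_gt0 Sn | apply: num_finite].
Qed.

Lemma num_eq_set0 U : U `<=` posN -> num U = num set0 -> U = set0.
Proof.
move=> UP U0; apply: contrapT => Un0; apply: (es_irrefl str (x := num U)).
rewrite {1}U0; apply: num_proper => //; split=> // US.
by apply: Un0; rewrite -subset0.
Qed.

Lemma num_eq_card_eq S U :
  S `<=` posN -> U `<=` posN -> num S = num U -> (S #= U)%card.
Proof.
move=> SP UP SU.
have [S0|S0] := eqVneq S set0.
  by rewrite S0 in SU *; rewrite (num_eq_set0 UP (esym SU)); apply: card_eqxx.
have U0 : U != set0.
  by apply: contra_neq S0 => U0; apply: num_eq_set0; rewrite // SU U0.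
have finSU : finite_set S <-> finite_set U.
  by rewrite -(in_N_num SP S0) -(in_N_num UP U0) SU.
have [fS|Sinf] := pselect (finite_set S); last first.
  by apply: infinite_nat_card_eq => // /finSU.2.
have [n Sn] := fS; have [m Um] := finSU.1 fS.
have nm : n = m.
  apply: (es_inj str); [exact: card_eqI_gt0 Sn | exact: card_eqI_gt0 Um |].
  by rewrite -(num_finite SP S0 Sn) -(num_finite UP U0 Um).
by rewrite nm in Sn; apply: card_eq_trans Sn _; rewrite card_eq_sym.
Qed.

Lemma num_setD1 S x : S `<=` posN -> S x -> num (S `\ x) <> num S.
Proof.
move=> SP Sx E; apply: (es_irrefl str (x := num S)); rewrite -{1}E.
apply: num_proper => //; first by move=> y [/SP].
by split=> [y []|/(_ x Sx) [_ /(_ erefl)]].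
Qed.

End Numerosity.

Theorem mainTheorem4 (T : Type) (emb : nat -> T) (add : T -> T -> T)
    (lt : T -> T -> Prop) (num : set nat -> T)
    (Hstr : ext_structure emb add lt)
    (Hunit : forall n, (0 < n)%N -> num [set n] = emb 1%N)
    (Hadd : forall S U, S `<=` posN -> U `<=` posN -> S `&` U = set0 ->
        num (S `|` U) = add (num S) (num U))
    (Hfin : forall S U, S `<=` posN -> U `<=` posN ->
        (forall n, (0 < n)%N -> (fcount S n <= fcount U n)%N) ->
        ext_le lt (num S) (num U))
    (Heucl : forall S U, S `<=` posN -> U `<=` posN -> S `<` U ->
        lt (num S) (num U)) :
  (* (a) *)
  (forall F, F `<=` posN -> finite_set F -> F != set0 ->
     forall n, (F #= `I_n)%card -> num F = emb n) /\
  (* (b) *)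
  (forall S, S `<=` posN -> S != set0 -> (in_N emb (num S) <-> finite_set S)) /\
  (* (c) *)
  (~ in_N emb (num posN) /\
   forall S, S `<` posN -> lt (num S) (num posN)) /\
  (* (d) *)
  (forall S U, S `<=` posN -> U `<=` posN -> num S = num U -> (S #= U)%card) /\
  (* (e) *)
  (exists S U, S `<=` posN /\ U `<=` posN /\ (S #= U)%card /\ num S <> num U).
Proof.
split.
  by move=> F FP _ F0 n; apply: (num_finite Hstr Hunit Hadd).
split; first exact: (in_N_num Hstr Hunit Hadd Heucl).
split.
  split; first exact: (num_infinite_notin_N Hstr Hunit Hadd Heucl) posN_infinite.
  by move=> S [SP SN]; apply: Heucl.
split; first exact: (num_eq_card_eq Hstr Hunit Hadd Heucl).
have setD1_infinite : infinite_set (posN `\ 1%N).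
  exact: infinite_setD posN_infinite (finite_set1 1%N).
exists posN, (posN `\ 1%N); split=> //; split; first by move=> y [].
split; first exact: infinite_nat_card_eq posN_infinite setD1_infinite.
by apply/nesym/(num_setD1 Hstr Heucl).
Qed.
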